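(* Let $H\ge 1$ be an integer, $V$ a finite node set with root $r\in V$, and let $(x,l,g)\in\mathcal{P}$, where $\mathcal{P}$ is the polytope defined in the context. Let $v_1,v_2,\ldots,v_{H+1}$ be a directed walk with $H$ arcs (so $v_i\neq v_{i+1}$ for $1\le i\le H$; nodes may repeat otherwise) such that $v_1\neq r$. Then $$\sum_{i=1}^{H} x_{v_i,v_{i+1}}\le H-1.$$
   Context: Setting: $V$ is a finite set of nodes of a complete undirected graph, $r\in V$ is a root, and $H$ is the hop limit. For every ordered pair $(u,v)$ of distinct nodes of $V$ there is a real variable $x_{u,v}$ (arc variable), and for every $v\in V$ and $i\in\{0,\dots,H\}$ there are real variables $l_{v,i}$ (''position of $v$ is less than $i$'') and $g_{i,v}$ (''position of $v$ is greater than $i$''). The partial-ordering polytope $\mathcal{P}$ is the set of all $(x,l,g)$ satisfying: (P1) $l_{r,0}=g_{0,r}=0$; (P2) $l_{v,1}=g_{H,v}=0$ for all $v\in V\setminus\{r\}$; (P3) $l_{v,i}-l_{v,i+1}\le 0$ for all $v\in V$, $i=0,\dots,H-1$; (P4) $g_{i,v}+l_{v,i+1}=1$ for all $v\in V$, $i=0,\dots,H-1$; (P5) $l_{u,i}+g_{i,v}\ge x_{u,v}$ for all $u\in V$, $v\in V\setminus\{u\}$, $i=0,\dots,H$; (P6) $\sum_{u\in V\setminus\{v\}}x_{u,v}\le 1$ for all $v\in V$; (P7) $\sum_{u\in V\setminus\{v,w\}}x_{u,v}\ge x_{v,w}$ for all $v\in V\setminus\{r\}$, $w\in V\setminus\{v\}$;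 (P8) $0\le x_{u,v}\le 1$ for all arcs; (P9) $0\le l_{v,i},g_{i,v}\le 1$ for all $v,i$. *)

From HB Require Import structures.
From mathcomp Require Import all_boot all_order all_algebra.
Set Implicit Arguments. Unset Strict Implicit. Unset Printing Implicit Defensive.
Import Order.TTheory GRing.Theory Num.Theory.
Local Open Scope ring_scope.

(* The partial-ordering polytope P for node set V (a finType), root r,
   hop limit H.  x u v = x_{u,v} (only meaningful for u <> v),
   l v i = l_{v,i}, g i v = g_{i,v}, for i in {0,...,H}. *)
Definition in_P (R : realFieldType) (V : finType) (r : V) (H : nat)
  (x : V -> V -> R) (l : V -> nat -> R) (g : nat -> V -> R) : Prop :=
  (l r 0%N = 0 /\ g 0%N r = 0) /\
      (forall v, v != r -> l v 1%N = 0 /\ g H v = 0) /\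
      (forall v (i : nat), (i < H)%N -> l v i - l v i.+1 <= 0) /\
      (forall v (i : nat), (i < H)%N -> g i v + l v i.+1 = 1) /\
      (forall u v (i : nat), u != v -> (i <= H)%N -> l u i + g i v >= x u v) /\
      (forall v, \sum_(u | u != v) x u v <= 1) /\
      (forall v w, v != r -> w != v ->
                  \sum_(u | (u != v) && (u != w)) x u v >= x v w) /\
      (forall u v, u != v -> 0 <= x u v <= 1) /\
      (forall v (i : nat), (i <= H)%N ->
                  (0 <= l v i <= 1) /\ (0 <= g i v <= 1)).

From HB Require Import structures.
From mathcomp Require Import all_boot all_order all_algebra.
From mathcomp Require Import lra.
Set Implicit Arguments. Unset Strict Implicit. Unset Printing Implicit Defensive.
Import Order.TTheory GRing.Theory Num.Theory.
Local Open Scope ring_scope.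

(* By (P5) and (P4) at position i+1, an arc (u,v) used as the
   (i+1)-st arc of a walk has x_{u,v} <= 1 + l_{u,i+1} - l_{v,i+2}, so the sum
   over the first H-1 arcs telescopes to at most (H-1) + l_{v_1,1} - l_{v_H,H},
   where l_{v_1,1} = 0 because v_1 is not the root.  The last arc costs at
   most l_{v_H,H}: by (P5) at position H when it does not enter the root, and
   by (P5) at position 0 together with (P3) when it does. *)

Section PartialOrderingPolytope.

Variables (R : realFieldType) (V : finType) (r : V) (H : nat).
Variables (x : V -> V -> R) (l : V -> nat -> R) (g : nat -> V -> R).
Hypothesis xlg_in_P : in_P r H x l g.

Lemma arc_le_telescope u v i : u != v -> (i.+1 < H)%N ->
  x u v <= 1 + l u i.+1 - l v i.+2.
Proof.
move=> neq_uv lt_iH.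
have [_ [_ [_ [P4 [P5 _]]]]] := xlg_in_P.
have := P5 u v i.+1 neq_uv (ltnW lt_iH).
have := P4 v i.+1 lt_iH.
lra.
Qed.

Lemma arc_le_last u v : (0 < H)%N -> u != v -> x u v <= l u H.
Proof.
have [[_ g0r] [P2 [P3 [_ [P5 [_ [_ [_ P9]]]]]]]] := xlg_in_P.
have /andP[l_ge0 _] := proj1 (P9 u H (leqnn H)).
have [->|neq_vr] := eqVneq v r => H_gt0 neq_uv.
  have := P5 u r 0%N neq_uv (leq0n H).
  have := P3 u 0%N H_gt0.
  rewrite g0r (proj1 (P2 u neq_uv)).
  lra.
have := P5 u v H neq_uv (leqnn H).
by rewrite (proj2 (P2 v neq_vr)) addr0.
Qed.

Lemma walk_prefix_sum_le (w : nat -> V) n : (n < H)%N -> w 0%N != r ->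
  (forall i, (i < n)%N -> w i != w i.+1) ->
  \sum_(i < n) x (w i) (w i.+1) <= n%:R - l (w n) n.+1.
Proof.
move=> + w0_neq_r; elim: n => [|n IHn] lt_nH walk_w.
  have [_ [P2 _]] := xlg_in_P.
  by rewrite big_ord0 (proj1 (P2 _ w0_neq_r)) subr0.
rewrite big_ord_recr /= -natr1.
have := IHn (ltnW lt_nH) (fun i lt_in => walk_w i (ltnW lt_in)).
have := arc_le_telescope (walk_w n (ltnSn n)) lt_nH.
lra.
Qed.

End PartialOrderingPolytope.

(* The walk v_1,...,v_{H+1} is encoded as w 0, ..., w H. *)
Theorem theorem1 (R : realFieldType) (V : finType) (r : V) (H : nat)
  (x : V -> V -> R) (l : V -> nat -> R) (g : nat -> V -> R)
  (w : nat -> V) :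
  (1 <= H)%N ->
  in_P r H x l g ->
  (forall i : nat, (i < H)%N -> w i != w i.+1) ->
  w 0%N != r ->
  \sum_(i < H) x (w i) (w i.+1) <= H%:R - 1.
Proof.
case: H => [|m] // _ xlg_in_P walk_w w0_neq_r.
rewrite big_ord_recr /= -natr1 addrK.
have := walk_prefix_sum_le xlg_in_P (ltnSn m) w0_neq_r
  (fun i lt_im => walk_w i (ltnW lt_im)).
have := arc_le_last xlg_in_P (ltn0Sn m) (walk_w m (ltnSn m)).
lra.
Qed.
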